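(* $\displaystyle\liminf_{k\to\infty}\frac{\gamma(k)}{k}\leq\frac{9}{10}$ and $\displaystyle\limsup_{k\to\infty}\frac{\gamma(k)}{k}\leq\frac32$.
   Context: The Thue–Morse word is $\mathbf t=\mathbf t_1\mathbf t_2\cdots$ where $\mathbf t_i\in\{0,1\}$ has the parity of the number of $1$'s in the binary expansion of $i-1$. For positive integers $\alpha\le\beta$, $\langle\alpha,\beta\rangle=\mathbf t_\alpha\cdots\mathbf t_\beta$. A $k$-anti-power is a word $w_1\cdots w_k$ with $w_1,\dots,w_k$ pairwise distinct words of equal length. $\mathcal F(k)$ is the set of odd positive integers $m$ such that $\langle 1,km\rangle$ is a $k$-anti-power (this set is nonempty for every $k$). $\gamma(k)=\min\mathcal F(k)$. *)

From HB Require Import structures.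
From mathcomp Require Import all_boot all_order all_algebra.
From Stdlib Require Import ClassicalEpsilon.
Set Implicit Arguments. Unset Strict Implicit. Unset Printing Implicit Defensive.

(* number of 1's in the binary expansion of n (fuel n is enough) *)
Fixpoint popcount_fuel (fuel n : nat) : nat :=
  match fuel with
  | 0 => 0
  | f.+1 => odd n + popcount_fuel f n./2
  end.
Definition popcount (n : nat) : nat := popcount_fuel n n.

(* Thue--Morse word, 1-indexed as in the paper: t_i = parity of popcount (i-1). *)
Definition tm (i : nat) : bool := odd (popcount i.-1).

Definition tm_factor (alpha beta : nat) : seq bool :=
  mkseq (fun j => tm (alpha + j)) (beta.+1 - alpha).

(* w is a k-anti-power: w = w_1 ... w_k with the w_j pairwise distinct
   words of equal length (that length is necessarily size w / k). *)
Definition is_antipower {T : eqType} (k : nat) (w : seq T) : bool :=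
  let L := size w %/ k in
  (k * L == size w) &&
  uniq [seq take L (drop (j * L) w) | j <- iota 0 k].

Definition inF (k m : nat) : bool :=
  odd m && is_antipower k (tm_factor 1 (k * m)).

(* gamma(k) = min F(k) (F(k) is nonempty for every k; default 0 otherwise) *)
Definition gamma (k : nat) : nat :=
  match excluded_middle_informative (exists m, inF k m) with
  | left H => ex_minn H
  | right _ => 0
  end.

From HB Require Import structures.
From mathcomp Require Import all_boot all_order all_algebra.
From mathcomp Require Import zify ring lra.
Import Order.TTheory GRing.Theory Num.Theory.

(* Write t for the Thue--Morse word indexed from 0.  Since
   [t_(2^b X + o) = t_X + t_o] for [o < 2^b] and t contains no factor [aaa],
   two factors of length 4 of t starting at positions of different parity
   differ.  Rescaling by [2^b] then shows that, for odd m, the length-m blocks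
   i and j of t differ whenever [j - i = 2^b D] with D odd and [3 * 2^b < m].
   If [k <= 2^(a+1)] and [3 * 2^a <= 2 (m - 1)], the only pairs of blocks
   escaping this argument are those at distance exactly [2^a]; for the odd
   lengths [m = 3 * 2^c + 1] and [m = 2^(a+1) + 3] they are separated by
   hand.  The first family puts [m ~ 9k/10] in F(k) for
   [k = 2^(c+1) + (2^(c+2) - 8)/3], and a case split on the position of k
   between consecutive powers of 2 gives [gamma k <= 3k/2 + 4] for all
   large k. *)

Lemma popcount_fuel0 f : popcount_fuel f 0 = 0.
Proof. by elim: f => //= f ->. Qed.

Lemma popcount_fuel_irrelevant f g n :
  n <= f -> n <= g -> popcount_fuel f n = popcount_fuel g n.
Proof.
elim: f g n => [|f IHf] [|g] n //=.
- by rewrite leqn0 => /eqP -> _; rewrite popcount_fuel0.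
- by move=> _; rewrite leqn0 => /eqP ->; rewrite popcount_fuel0.
- by move=> nf ng; rewrite (IHf g) //; lia.
Qed.

Lemma popcount_double_add n (b : bool) : popcount (2 * n + b) = b + popcount n.
Proof.
have [n0 | n_pos] := posnP (2 * n + b).
  by move: n0; case: b; case: n.
have [f Ef] : exists f, 2 * n + b = f.+1 by exists (2 * n + b).-1; lia.
rewrite {1}/popcount Ef.
change (odd f.+1 + popcount_fuel f f.+1./2 = b + popcount n); rewrite -Ef.
rewrite (_ : odd (2 * n + b) = b); last by rewrite oddD oddM /= oddb.
rewrite (_ : (2 * n + b)./2 = n); last by case: b {Ef} n_pos; lia.
by rewrite (@popcount_fuel_irrelevant _ n) //; lia.
Qed.

Lemma popcount_pow2_add b X o :
  o < 2 ^ b -> popcount (2 ^ b * X + o) = popcount X + popcount o.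
Proof.
elim: b o => [|b IHb] o.
  by rewrite expn0 ltnS leqn0 mul1n => /eqP ->; rewrite !addn0.
rewrite expnS => o_lt.
have -> : 2 * 2 ^ b * X + o = 2 * (2 ^ b * X + o./2) + odd o by lia.
rewrite [in RHS](_ : o = 2 * o./2 + odd o); last by lia.
by rewrite !popcount_double_add IHb; lia.
Qed.

(* The Thue--Morse word indexed from 0: [tm i = thue_morse i.-1]. *)
Definition thue_morse n : bool := odd (popcount n).

Lemma thue_morse_double_add n (b : bool) :
  thue_morse (2 * n + b) = b (+) thue_morse n.
Proof. by rewrite /thue_morse popcount_double_add oddD oddb. Qed.

Lemma thue_morse_double n : thue_morse (2 * n) = thue_morse n.
Proof. by have := thue_morse_double_add n false; rewrite addn0. Qed.

Lemma thue_morse_doubleS n : thue_morse (2 * n + 1) = ~~ thue_morse n.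
Proof. exact: thue_morse_double_add n true. Qed.

Lemma thue_morse_pow2_add b X o :
  o < 2 ^ b -> thue_morse (2 ^ b * X + o) = thue_morse X (+) thue_morse o.
Proof. by move=> o_lt; rewrite /thue_morse popcount_pow2_add // oddD. Qed.

Lemma thue_morse_no_cube w :
  ~~ [&& thue_morse w == thue_morse (w + 1) & thue_morse (w + 1) == thue_morse (w + 2)].
Proof.
have -> : w = 2 * w./2 + odd w by lia.
case: (odd w); set u := w./2.
- rewrite (_ : 2 * u + true + 1 = 2 * (u + 1)); last by lia.
  rewrite (_ : 2 * u + true + 2 = 2 * (u + 1) + 1); last by lia.
  rewrite thue_morse_doubleS thue_morse_double thue_morse_doubleS.
  by case: (thue_morse u); case: (thue_morse (u + 1)).
- rewrite /= addn0 (_ : 2 * u + 2 = 2 * (u + 1)); last by lia.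
  by rewrite thue_morse_double thue_morse_doubleS; case: (thue_morse u).
Qed.

(* As [t_(2u+1) = ~~ t_(2u)], agreement of the two windows would force
   [t_v = t_(v+1) = t_(v+2)] where [Y = 2v + 1]. *)
Lemma thue_morse_window4_neq X Y : ~~ odd X -> odd Y ->
  exists2 s, s < 4 & thue_morse (X + s) != thue_morse (Y + s).
Proof.
move=> X_even Y_odd.
have /allPn [s] : ~~ all (fun s => thue_morse (X + s) == thue_morse (Y + s)) (iota 0 4).
  have -> : X = 2 * X./2 by lia.
  have -> : Y = 2 * Y./2 + 1 by lia.
  set u := X./2; set v := Y./2; rewrite /= !addn0 andbT.
  rewrite (_ : 2 * u + 2 = 2 * (u + 1)); last by lia.
  rewrite (_ : 2 * u + 3 = 2 * (u + 1) + 1); last by lia.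
  rewrite (_ : 2 * v + 1 + 1 = 2 * (v + 1)); last by lia.
  rewrite (_ : 2 * v + 1 + 2 = 2 * (v + 1) + 1); last by lia.
  rewrite (_ : 2 * v + 1 + 3 = 2 * (v + 2)); last by lia.
  rewrite !thue_morse_double !thue_morse_doubleS.
  have := thue_morse_no_cube v; rewrite (_ : v + 2 = v + 1 + 1); last by lia.
  by case: (thue_morse u); case: (thue_morse (u + 1)); case: (thue_morse v);
     case: (thue_morse (v + 1)); case: (thue_morse (v + 1 + 1)).
by rewrite mem_iota => s_lt neq; exists s.
Qed.

Lemma thue_morse_odd_shift_neq X D : odd D ->
  exists2 s, s < 4 & thue_morse (X + s) != thue_morse (X + D + s).
Proof.
move=> D_odd; case: (boolP (odd X)) => X_odd.
- have [|s s_lt neq] := @thue_morse_window4_neq (X + D) X _ X_odd.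
    by rewrite oddD X_odd D_odd.
  by exists s; rewrite // eq_sym.
- by apply: thue_morse_window4_neq; rewrite // oddD (negbTE X_odd) D_odd.
Qed.

Lemma thue_morse_shift_pow2 b n d :
  (thue_morse (n + 2 ^ b * d) == thue_morse n) =
  (thue_morse (n %/ 2 ^ b + d) == thue_morse (n %/ 2 ^ b)).
Proof.
have r_lt : n %% 2 ^ b < 2 ^ b by rewrite ltn_mod expn_gt0.
have En : n = 2 ^ b * (n %/ 2 ^ b) + n %% 2 ^ b by rewrite mulnC -divn_eq.
move: (n %/ 2 ^ b) (n %% 2 ^ b) r_lt En => q r r_lt ->.
rewrite (_ : 2 ^ b * q + r + 2 ^ b * d = 2 ^ b * (q + d) + r); last by lia.
rewrite !thue_morse_pow2_add //.
by case: (thue_morse r); case: (thue_morse (q + d)); case: (thue_morse q).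
Qed.

Definition blocks_differ (m i j : nat) : Prop :=
  exists2 u, u < m & thue_morse (i * m + u) != thue_morse (j * m + u).

Lemma inF_of_blocks_differ k m : 0 < k -> odd m ->
  (forall i j, i < j < k -> blocks_differ m i j) -> inF k m.
Proof.
move=> k_pos m_odd differ; rewrite /inF m_odd /=.
have -> : tm_factor 1 (k * m) = mkseq thue_morse (k * m).
  by rewrite /tm_factor subSS subn0; apply: eq_mkseq => j; rewrite /tm add1n.
have block_nth i u : i < k -> u < m ->
    nth false (take m (drop (i * m) (mkseq thue_morse (k * m)))) u = thue_morse (i * m + u).
  by move=> ik um; rewrite nth_take // nth_drop nth_mkseq //; nia.
rewrite /is_antipower size_mkseq mulKn // eqxx /=.
rewrite map_inj_in_uniq ?iota_uniq // => i j; rewrite !mem_iota !add0n => ik jk eq_ij.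
wlog ij : i j ik jk eq_ij / i < j.
  by move=> wlog_ij; case: (ltngtP i j) => // ij; [exact: wlog_ij | exact/esym/(wlog_ij j i)].
have [|u um] := differ i j; first by rewrite ij.
by rewrite -!block_nth // eq_ij eqxx.
Qed.

Lemma blocks_differ_pow2_shift m i b d s : 2 ^ b * s < m ->
  thue_morse (i * m %/ 2 ^ b + s + d * m) != thue_morse (i * m %/ 2 ^ b + s) ->
  blocks_differ m i (i + 2 ^ b * d).
Proof.
move=> s_lt neq; exists (2 ^ b * s) => //.
rewrite eq_sym (_ : (i + 2 ^ b * d) * m + 2 ^ b * s = i * m + 2 ^ b * s + 2 ^ b * (d * m));
  last by lia.
have Ediv : (i * m + 2 ^ b * s) %/ 2 ^ b = i * m %/ 2 ^ b + s.
  by rewrite addnC mulnC divnMDl ?expn_gt0 // addnC.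
by rewrite thue_morse_shift_pow2 Ediv.
Qed.

Lemma blocks_differ_odd_part m i b D : odd D -> odd m -> 3 * 2 ^ b < m ->
  blocks_differ m i (i + 2 ^ b * D).
Proof.
move=> D_odd m_odd m_gt.
have [|s s_lt neq] := @thue_morse_odd_shift_neq (i * m %/ 2 ^ b) (D * m).
  by rewrite oddM D_odd.
by apply: (@blocks_differ_pow2_shift _ _ _ _ s); [nia | rewrite eq_sym addnAC].
Qed.

Lemma inF_of_pow2_blocks_differ a k m : 0 < k -> odd m -> k <= 2 * 2 ^ a ->
  3 * 2 ^ a <= 2 * (m - 1) ->
  (forall i, i + 2 ^ a < k -> blocks_differ m i (i + 2 ^ a)) -> inF k m.
Proof.
move=> k_pos m_odd k_le m_ge adjacent.
apply: inF_of_blocks_differ => // i j /andP[ij jk].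
have [d Ej] : exists d, j = i + d by exists (j - i); lia.
subst j.
have d_pos : 0 < d by lia.
case: (ltnP (logn 2 d) a) => [lt_a | ge_a].
- have -> : d = 2 ^ logn 2 d * d`_2^' by rewrite -p_part partnC.
  apply: blocks_differ_odd_part => //; first by rewrite odd_2'nat part_pnat.
  have : 2 ^ (logn 2 d).+1 <= 2 ^ a by rewrite leq_exp2l.
  by rewrite expnS; lia.
- have : 2 ^ a %| d by rewrite pfactor_dvdn.
  case/dvdnP=> c Ed.
  have d_eq : d = 2 ^ a by move: Ed k_le; move: (2 ^ a) c => A [|[|c]]; nia.
  by rewrite d_eq in jk *; apply: adjacent.
Qed.

Lemma thue_morse_thrice_pow2_add c z :
  z < 2 ^ c.+1 -> thue_morse (3 * 2 ^ c + z) = thue_morse z.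
Proof.
move=> z_lt; have pow_pos : 0 < 2 ^ c by rewrite expn_gt0.
have q_lt : z %/ 2 ^ c < 2 by rewrite ltn_divLR // -expnS.
have r_lt : z %% 2 ^ c < 2 ^ c by rewrite ltn_mod.
have -> : 3 * 2 ^ c + z = 2 ^ c * (3 + z %/ 2 ^ c) + z %% 2 ^ c.
  by rewrite {1}(divn_eq z (2 ^ c)); lia.
rewrite [in RHS](divn_eq z (2 ^ c)) [z %/ _ * _]mulnC !thue_morse_pow2_add //.
by case: (z %/ 2 ^ c) q_lt => [|[|]].
Qed.

Lemma thue_morse_shift3_match Y :
  (thue_morse Y == thue_morse (Y + 3)) || (thue_morse (Y + 1) == thue_morse (Y + 4)).
Proof.
have -> : Y = 2 * Y./2 + odd Y by lia.
have := thue_morse_no_cube Y./2.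
case: (odd Y); set u := Y./2.
- rewrite (_ : 2 * u + true = 2 * u + 1) //.
  rewrite (_ : 2 * u + 1 + 3 = 2 * (u + 2)); last by lia.
  rewrite (_ : 2 * u + 1 + 1 = 2 * (u + 1)); last by lia.
  rewrite (_ : 2 * u + 1 + 4 = 2 * (u + 2) + 1); last by lia.
  rewrite !thue_morse_double !thue_morse_doubleS.
  by case: (thue_morse u); case: (thue_morse (u + 1)); case: (thue_morse (u + 2)).
- rewrite addn0 (_ : 2 * u + 3 = 2 * (u + 1) + 1); last by lia.
  rewrite (_ : 2 * u + 4 = 2 * (u + 2)); last by lia.
  rewrite !thue_morse_double !thue_morse_doubleS.
  by case: (thue_morse u); case: (thue_morse (u + 1)); case: (thue_morse (u + 2)).
Qed.

Lemma blocks_differ_thrice_pow2_add1 c i :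
  i * (3 * 2 ^ c + 1) < (2 ^ c.+1 - 2) * 2 ^ c.+1 ->
  blocks_differ (3 * 2 ^ c + 1) i (i + 2 ^ c.+1).
Proof.
set m := 3 * 2 ^ c + 1; set X := i * m %/ 2 ^ c.+1 => i_lt.
have X_lt : X < 2 ^ c.+1 - 2 by rewrite ltn_divLR ?expn_gt0.
rewrite -[A in i + A]muln1.
apply: (@blocks_differ_pow2_shift _ _ _ _ (odd X)).
  by rewrite /m expnS; case: (odd X); lia.
rewrite mul1n (_ : X + odd X + m = 3 * 2 ^ c + (X + odd X + 1)); last by rewrite /m; lia.
rewrite thue_morse_thrice_pow2_add; last by lia.
have -> : X + odd X = 2 * (X + odd X)./2 by lia.
by rewrite thue_morse_doubleS thue_morse_double; case: (thue_morse _).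
Qed.

Lemma blocks_differ_twice_pow2_add3 a i :
  i * (2 * 2 ^ a + 3) < (2 * 2 ^ a - 4) * 2 ^ a ->
  blocks_differ (2 * 2 ^ a + 3) i (i + 2 ^ a).
Proof.
set m := 2 * 2 ^ a + 3; set X := i * m %/ 2 ^ a => i_lt.
have X_lt : X < 2 * 2 ^ a - 4 by rewrite ltn_divLR ?expn_gt0.
have [s s_le match3] : exists2 s, s <= 1 & thue_morse (X + s) = thue_morse (X + s + 3).
  case/orP: (thue_morse_shift3_match X) => /eqP E; [exists 0 | exists 1] => //.
    by rewrite addn0.
  by rewrite -addnA E.
rewrite -[A in i + A]muln1.
apply: (@blocks_differ_pow2_shift _ _ _ _ s); first by rewrite /m; nia.
rewrite mul1n (_ : X + s + m = 2 ^ a.+1 * 1 + (X + s + 3)); last by rewrite /m expnS; lia.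
rewrite thue_morse_pow2_add; last by rewrite expnS; lia.
by rewrite -match3; case: (thue_morse (X + s)).
Qed.

Lemma inF_thrice_pow2_add1 c k : 0 < c -> 0 < k -> k <= 2 ^ c.+2 ->
  (forall i, i + 2 ^ c.+1 < k -> i * (3 * 2 ^ c + 1) < (2 ^ c.+1 - 2) * 2 ^ c.+1) ->
  inF k (3 * 2 ^ c + 1).
Proof.
move=> c_pos k_pos k_le small.
apply: (@inF_of_pow2_blocks_differ c.+1) => //.
- by rewrite oddD oddM oddX; case: c c_pos {k_le small}.
- by rewrite expnS; lia.
- by move=> i /small /blocks_differ_thrice_pow2_add1.
Qed.

Lemma inF_twice_pow2_add3 a k : 0 < k -> k <= 2 ^ a.+1 ->
  (forall i, i + 2 ^ a < k -> i * (2 * 2 ^ a + 3) < (2 * 2 ^ a - 4) * 2 ^ a) ->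
  inF k (2 * 2 ^ a + 3).
Proof.
move=> k_pos k_le small.
apply: (@inF_of_pow2_blocks_differ a) => //.
- by rewrite oddD oddM.
- by rewrite -expnS.
- by lia.
- by move=> i /small /blocks_differ_twice_pow2_add3.
Qed.

Lemma gamma_leq k m : inF k m -> gamma k <= m.
Proof.
rewrite /gamma => km; case: ClassicalEpsilon.excluded_middle_informative => [F_ne | F_empty].
  by case: ex_minnP => n _; apply.
by case: F_empty; exists m.
Qed.

Lemma gamma_liminf_bound N : exists2 k, N <= k & 10 * gamma k <= 9 * k + 40.
Proof.
have N_lt : N < 2 ^ N.+1 by apply/ltnW/ltn_expl.
pose k := 2 * 2 ^ N.+1 + (4 * 2 ^ N.+1 - 8) %/ 3.
have kF : inF k (3 * 2 ^ N.+1 + 1).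
  apply: inF_thrice_pow2_add1 => //; rewrite /k !expnS; [lia | lia |].
  by move=> i; move: (2 ^ N) => H; nia.
exists k; first by lia.
by move/gamma_leq: kF; lia.
Qed.

Lemma gamma_limsup_bound k : 64 <= k -> 2 * gamma k <= 3 * k + 8.
Proof.
move=> k_ge.
have [c [k_lb k_ub]] : exists c, 4 * 2 ^ c < k /\ k <= 8 * 2 ^ c.
  have a_le : 2 ^ trunc_log 2 (k - 1) <= k - 1 by apply: trunc_logP; lia.
  have a_gt : k - 1 < 2 ^ (trunc_log 2 (k - 1)).+1 by apply: trunc_log_ltn.
  move: (trunc_log 2 (k - 1)) a_le a_gt => [|[|c]]; rewrite !expnS; try lia.
  by exists c; lia.
case: (leqP (2 * k) (12 * 2 ^ c)) => [k_small | k_big].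
  have kF : inF k (3 * 2 ^ c.+1 + 1).
    apply: inF_thrice_pow2_add1 => //; [lia | rewrite !expnS; lia | move=> i].
    by rewrite !expnS; move: (2 ^ c) k_lb k_small => H *; nia.
  by move/gamma_leq: kF; rewrite expnS; lia.
case: (leqP (k + 3) (8 * 2 ^ c)) => [k_mid | k_large].
  have kF : inF k (2 * 2 ^ c.+2 + 3).
    apply: inF_twice_pow2_add3; [lia | rewrite !expnS; lia | move=> i].
    by rewrite !expnS; move: (2 ^ c) k_lb k_big k_mid => H *; nia.
  by move/gamma_leq: kF; rewrite !expnS; lia.
have kF : inF k (3 * 2 ^ c.+2 + 1).
  apply: inF_thrice_pow2_add1 => //; [lia | rewrite !expnS; lia | move=> i].
  by rewrite !expnS; lia.
by move/gamma_leq: kF; rewrite !expnS; lia.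
Qed.

Local Open Scope ring_scope.

Lemma ratio_eventually_lt (p q r : nat) (eps : rat) : (0 < q)%N -> 0 < eps ->
  exists N : nat, forall g k : nat, (N <= k)%N -> (q * g <= p * k + r)%N ->
    g%:R / k%:R < p%:R / q%:R + eps.
Proof.
move=> q_pos eps_pos; set C := r%:R / (q%:R * eps).
exists (Num.bound C).+1 => g k k_ge g_le.
have k_pos : (0 : rat) < k%:R by rewrite ltr0n; lia.
have qR_pos : (0 : rat) < q%:R by rewrite ltr0n.
have r_lt : r%:R < q%:R * k%:R * eps.
  have C_lt : C < k%:R.
    apply: (lt_le_trans (archi_boundP _)); first by rewrite /C divr_ge0 ?mulr_ge0 ?ler0n ?ltW.
    by rewrite ler_nat; lia.
  by move: C_lt; rewrite /C ltr_pdivrMr ?mulr_gt0 // mulrA [k%:R * _]mulrC.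
have gR_le : q%:R * g%:R <= p%:R * k%:R + r%:R :> rat.
  by rewrite -!natrM -natrD ler_nat.
have -> : (p%:R / q%:R + eps) = (p%:R + q%:R * eps) / q%:R.
  by field; rewrite pnatr_eq0 -lt0n.
rewrite ltr_pdivrMr // mulrAC ltr_pdivlMr //.
nra.
Qed.

Theorem theorem4 :
  (forall (eps : rat), 0 < eps -> forall N : nat, exists k : nat,
      (N <= k)%N /\ (gamma k)%:R / k%:R < 9%:R / 10%:R + eps) /\
  (forall (eps : rat), 0 < eps -> exists N : nat, forall k : nat,
      (N <= k)%N -> (gamma k)%:R / k%:R < 3%:R / 2%:R + eps).
Proof.
split=> [eps eps_pos N | eps eps_pos].
- have [N0 ratio_lt] := @ratio_eventually_lt 9 10 40 eps isT eps_pos.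
  have [k k_ge gamma_le] := gamma_liminf_bound (maxn N N0).
  exists k; split; first exact: leq_trans (leq_maxl N N0) k_ge.
  exact: ratio_lt (leq_trans (leq_maxr N N0) k_ge) gamma_le.
- have [N0 ratio_lt] := @ratio_eventually_lt 3 2 8 eps isT eps_pos.
  exists (maxn 64 N0) => k k_ge.
  apply: ratio_lt; first exact: leq_trans (leq_maxr 64 N0) k_ge.
  exact/gamma_limsup_bound/(leq_trans (leq_maxl 64 N0) k_ge).
Qed.
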